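(* Let $\mathcal{P}=\langle P,\le\rangle$ be a finite bounded poset with $|P|\ge 2$ and height $H$, and let $R^+(\mathcal{P})$ be its interval rank poset. Then $H(R^+(\mathcal{P}))\ge H(\mathcal{P})$.
   Context: A poset is bounded if it has a least and a greatest element. The height $H(\mathcal{Q})$ of a finite poset is the number of elements in its largest chain; $H=H(\mathcal{P})$. For $a\in P$, $\uparrow a=\{b:b\ge a\}$ and $\downarrow a=\{b:b\le a\}$ as subposets. The standard interval rank is $R^+(a)=[H(\uparrow a)-1,\;H-H(\downarrow a)]$. The interval rank poset $R^+(\mathcal{P})$ is the set $\{R^+(a):a\in P\}$ of intervals ordered by $\ge_W$, where $[x_*,x^*]\le_W[y_*,y^*]$ iff $x_*\le y_*$ and $x^*\le y^*$. *)

From mathcomp Require Import all_boot all_order.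
Set Implicit Arguments. Unset Strict Implicit. Unset Printing Implicit Defensive.
Import Order.Theory.
Local Open Scope order_scope.

Section Heights.
Context {disp : Order.disp_t} {T : finPOrderType disp}.

Definition is_chain (C : {set T}) : bool :=
  [forall x in C, forall y in C, (x <= y) || (y <= x)].

Definition height (S : {set T}) : nat :=
  \max_(C : {set T} | (C \subset S) && is_chain C) #|C|.

Definition Hgt : nat := height [set: T].

Definition upset (a : T) : {set T} := [set b | a <= b].
Definition downset (a : T) : {set T} := [set b | b <= a].

(* Standard interval rank R^+(a) = [H(up a) - 1, H - H(down a)], as a pair. *)
Definition Rplus (a : T) : nat * nat :=
  ((height (upset a)).-1, (Hgt - height (downset a))%N).

Definition leW (x y : nat * nat) : bool := ((x.1 <= y.1) && (x.2 <= y.2))%N.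

Definition Rplus_elems : seq (nat * nat) := undup [seq Rplus a | a <- enum T].

(* Height of R^+(P) ordered by <=_W: largest set of (indices of distinct)
   intervals that are pairwise <=_W-comparable. *)
Definition height_Rplus : nat :=
  \max_(C : {set 'I_(size Rplus_elems)} |
        [forall i in C, forall j in C,
           leW (nth (0,0)%N Rplus_elems i) (nth (0,0)%N Rplus_elems j)
        || leW (nth (0,0)%N Rplus_elems j) (nth (0,0)%N Rplus_elems i)])
    #|C|.

End Heights.

Definition bounded_poset {disp : Order.disp_t} (T : finPOrderType disp) : Prop :=
  (exists b : T, forall x : T, b <= x) /\ (exists t : T, forall x : T, x <= t).

(** The map [a |-> R^+(a)] reverses the order (up-sets shrink and
    down-sets grow as [a] increases), and it is injective on comparable pairs
    because the height of the up-set drops strictly along [a < b].  Hence it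
    maps a chain of maximum size [H] bijectively onto a chain of [R^+(P)]. *)
From mathcomp Require Import all_boot all_order.
Set Implicit Arguments. Unset Strict Implicit. Unset Printing Implicit Defensive.
Import Order.Theory.
Local Open Scope order_scope.

Section Heights.
Context {disp : Order.disp_t} {T : finPOrderType disp}.
Local Notation Rplus_elems := (@Rplus_elems disp T).
Local Notation height_Rplus := (@height_Rplus disp T).
Implicit Types (S C : {set T}) (a b : T).

Lemma is_chainP C :
  reflect {in C &, forall x y, (x <= y) || (y <= x)} (is_chain C).
Proof.
apply: (iffP forallP) => [chC x y xC yC | chC x].
  by move: (chC x); rewrite xC => /forallP/(_ y); rewrite yC.
by apply/implyP => xC; apply/forallP => y; apply/implyP; exact: chC.
Qed.

Lemma is_chain1 a : is_chain [set a].
Proof. by apply/is_chainP => x y /set1P-> /set1P->; rewrite lexx. Qed.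

Lemma is_chainU1 a C :
  is_chain C -> {in C, forall x, a <= x} -> is_chain (a |: C).
Proof.
move=> /is_chainP chC le_aC; apply/is_chainP => x y.
case/setU1P=> [->|xC]; case/setU1P=> [->|yC]; rewrite ?lexx ?le_aC ?orbT //.
exact: chC.
Qed.

Lemma leq_height S C : C \subset S -> is_chain C -> (#|C| <= height S)%N.
Proof.
by move=> sCS chC; apply: (bigop.leq_bigmax_cond (F := fun C : {set T} => #|C|)); rewrite sCS.
Qed.

Lemma height_chain S :
  exists2 C : {set T}, (C \subset S) && is_chain C & #|C| = height S.
Proof.
have chain0 : (set0 \subset S) && is_chain (set0 : {set T}).
  by rewrite sub0set; apply/is_chainP => x; rewrite inE.
have nonempty : (0 < #|[pred C : {set T} | (C \subset S) && is_chain C]|)%N.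
  by apply/card_gt0P; exists set0.
have [C chC eqC] := bigop.eq_bigmax_cond (fun C : {set T} => #|C|) nonempty.
by exists C; rewrite // eqC; apply: eq_bigl => D; rewrite inE.
Qed.

Lemma height_subset S1 S2 : S1 \subset S2 -> (height S1 <= height S2)%N.
Proof.
move=> sS12; have [C /andP[sCS1 chC] <-] := height_chain S1.
exact: leq_height (subset_trans sCS1 sS12) chC.
Qed.

Lemma height_upset_gt0 a : (0 < height (upset a))%N.
Proof. by rewrite -(cards1 a) leq_height ?is_chain1 // sub1set inE. Qed.

Lemma height_upset_lt a b : a < b -> (height (upset b) < height (upset a))%N.
Proof.
move=> lt_ab; have [C /andP[sCb chC] <-] := height_chain (upset b).
have le_aC : {in C, forall x, a <= x}.
  by move=> x /(subsetP sCb); rewrite inE; apply: le_trans (ltW lt_ab).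
have aNC : a \notin C by apply/negP => /(subsetP sCb); rewrite inE lt_geF.
have sUa : a |: C \subset upset a.
  by apply/subsetP => x /setU1P[->|/le_aC]; rewrite inE.
by have := leq_height sUa (is_chainU1 chC le_aC); rewrite cardsU1 aNC.
Qed.

Lemma leW_Rplus a b : a <= b -> leW (Rplus b) (Rplus a).
Proof.
move=> le_ab; apply/andP; split; rewrite /=.
  rewrite -!subn1; apply/leq_sub2r/height_subset/subsetP => x; rewrite !inE.
  exact: le_trans.
apply/leq_sub2l/height_subset/subsetP => x; rewrite !inE => le_xa.
exact: le_trans le_ab.
Qed.

Lemma Rplus_lt_neq a b : a < b -> Rplus a != Rplus b.
Proof.
move=> /height_upset_lt; apply: contraTneq => -[eq_up _].
suff -> : height (upset a) = height (upset b) by rewrite ltnn.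
by rewrite -(prednK (height_upset_gt0 a)) eq_up prednK ?height_upset_gt0.
Qed.

Lemma Rplus_inj_chain C : is_chain C -> {in C &, injective Rplus}.
Proof.
move=> /is_chainP chC x y xC yC eqR; case: (eqVneq x y) => // neq_xy.
case/orP: (chC x y xC yC) => le_xy.
  have lt_xy : x < y by rewrite lt_neqAle neq_xy.
  by move: (Rplus_lt_neq lt_xy); rewrite eqR eqxx.
have lt_yx : y < x by rewrite lt_neqAle eq_sym neq_xy.
by move: (Rplus_lt_neq lt_yx); rewrite eqR eqxx.
Qed.

Lemma Rplus_elemsP a : Rplus a \in Rplus_elems.
Proof. by rewrite mem_undup map_f ?mem_enum. Qed.

Definition Rplus_index a : 'I_(size Rplus_elems) :=
  Ordinal (etrans (index_mem _ _) (Rplus_elemsP a)).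

Lemma nth_Rplus_index a : nth (0, 0)%N Rplus_elems (Rplus_index a) = Rplus a.
Proof. exact: nth_index (Rplus_elemsP a). Qed.

Lemma leq_height_Rplus C : is_chain C -> (#|C| <= height_Rplus)%N.
Proof.
move=> chC; have inj_idx : {in C &, injective Rplus_index}.
  move=> x y xC yC eq_idx; apply: (Rplus_inj_chain chC) => //.
  by rewrite -!nth_Rplus_index eq_idx.
rewrite -(card_in_imset inj_idx).
apply: (bigop.leq_bigmax_cond (F := fun I : {set _} => #|I|)).
apply/forallP => i; apply/implyP => /imsetP[x xC ->].
apply/forallP => j; apply/implyP => /imsetP[y yC ->].
rewrite !nth_Rplus_index.
by case/orP: (is_chainP _ chC x y xC yC) => /leW_Rplus->; rewrite ?orbT.
Qed.

End Heights.

Theorem proposition5 (disp : Order.disp_t) (T : finPOrderType disp) :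
  bounded_poset T -> (2 <= #|T|)%N ->
  (@Hgt disp T <= @height_Rplus disp T)%N.
Proof.
move=> _ _; rewrite /Hgt; have [C /andP[_ chC] <-] := height_chain [set: T].
exact: leq_height_Rplus.
Qed.
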